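(* For any category $\mathbf{E}$, the virtual double category $\mathbb{C}\mathrm{ospan}(\mathbf{E})$ has globular decompositions.
   Context: A virtual double category (VDC) has objects, tight arrows, loose arrows, and $n$-ary multicells from a composable path of $n$ loose arrows (an object when $n=0$) to a loose arrow with two tight sides, with identities and associative unital composition $\frac{\alpha_1\cdots\alpha_m}{\beta}$. A multicell is globular if its tight sides are identities. Globular decompositions: for $n\ge0$, $\mathbb{D}$ has $n$-ary globular decompositions if for every $n$-ary multicell $\alpha$ and every $m\ge1$ and $k_1+\cdots+k_m=n$ ($k_i\ge0$), $\alpha$ can be written as $\frac{\alpha_1\cdots\alpha_m}{\beta}$ with $\alpha_i$ $k_i$-ary and $\beta$ a globular $m$-ary multicell, and any two such decompositions are equivalent under the equivalence relation generated by $(\frac{\alpha_1}{\sigma_1},\dots,\frac{\alpha_m}{\sigma_m};\beta)\sim(\alpha_1,\dots,\alpha_m;\frac{\sigma_1\cdots\sigma_m}{\beta})$ for compatible rows $(\sigma_1,\dots,\sigma_m)$ of unary multicells whose outermost tight sides are identities. $\mathbb{D}$ has globular decompositions if it has $n$-ary globular decompositions for all $n\ge0$. $\mathbb{C}\mathrm{ospan}(\mathbf{E})$ has tight category $\mathbf{E}$, loose arrows the cospans $x\xrightarrow{a}z\xleftarrow{b}y$, and $n$-ary multicells from $x_{i-1}\xrightarrow{a_i}y_i\xleftarrow{b_i}x_i$ ($1\le i\le n$) to $z_0\xrightarrow{d_0}w\xleftarrow{d_1}z_1$ with tight sides $c_0,c_1$ given by morphisms $e_i:y_i\to w$ with $e_1a_1=d_0c_0$,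 $e_ib_i=e_{i+1}a_{i+1}$, $e_nb_n=d_1c_1$ (for $n=0$ the condition $d_0c_0=d_1c_1$); composition by pasting. *)

From Stdlib Require Import List Relations.
Import ListNotations.

Record Category : Type := {
  Ob : Type;
  Hom : Ob -> Ob -> Type;
  idm : forall x, Hom x x;
  comp : forall {x y z}, Hom y z -> Hom x y -> Hom x z;
  comp_id_l : forall x y (f : Hom x y), comp (idm y) f = f;
  comp_id_r : forall x y (f : Hom x y), comp f (idm x) = f;
  comp_assoc : forall x y z t (f : Hom z t) (g : Hom y z) (h : Hom x y),
      comp f (comp g h) = comp (comp f g) h
}.
Arguments Hom {c} _ _.
Arguments idm {c} _.
Arguments comp {c x y z} _ _.

Section CospanVDC.
Context {E : Category}.

(** Loose arrows of Cospan(E): cospans x --lleg--> apex <--rleg-- y *)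
Record Cospan (x y : Ob E) : Type := {
  apex : Ob E;
  lleg : Hom x apex;
  rleg : Hom y apex
}.
Arguments apex {x y} _.
Arguments lleg {x y} _.
Arguments rleg {x y} _.

Inductive Path : Ob E -> Ob E -> Type :=
| pnil (x : Ob E) : Path x x
| pcons {x y z : Ob E} (C : Cospan x y) (r : Path y z) : Path x z.

Fixpoint plength {x y} (p : Path x y) : nat :=
  match p with pnil _ => 0 | pcons _ r => S (plength r) end.

Fixpoint app {x y z} (p : Path x y) : Path y z -> Path x z :=
  match p in Path x y return Path y z -> Path x z with
  | pnil _ => fun q => q
  | pcons C r => fun q => pcons C (app r q)
  end.

Fixpoint Legs {x y} (p : Path x y) (w : Ob E) : Type :=
  match p with
  | pnil _ => unit
  | pcons C r => (Hom (apex C) w * Legs r w)%type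
  end.

Fixpoint legs_ok {x y} (p : Path x y) {w : Ob E} :
    Hom x w -> Hom y w -> Legs p w -> Prop :=
  match p in Path x y return Hom x w -> Hom y w -> Legs p w -> Prop with
  | pnil _ => fun f g _ => f = g
  | pcons C r => fun f g l =>
      comp (fst l) (lleg C) = f /\ legs_ok r (comp (fst l) (rleg C)) g (snd l)
  end.

(** n-ary multicells of Cospan(E) from the path p to the cospan T,
    with tight sides c0, c1. *)
Definition Cell {x y z0 z1} (p : Path x y) (T : Cospan z0 z1)
    (c0 : Hom x z0) (c1 : Hom y z1) : Type :=
  { l : Legs p (apex T) | legs_ok p (comp (lleg T) c0) (comp (rleg T) c1) l }.

Definition cell_legs {x y z0 z1} {p : Path x y} {T : Cospan z0 z1} {c0 c1}
  (a : Cell p T c0 c1) : Legs p (apex T) := proj1_sig a.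

Fixpoint legs_post {x y} (p : Path x y) {w w'} (h : Hom w w') : Legs p w -> Legs p w' :=
  match p return Legs p w -> Legs p w' with
  | pnil _ => fun _ => tt
  | pcons C r => fun l => (comp h (fst l), legs_post r h (snd l))
  end.

Fixpoint legs_app {x y z} (p : Path x y) {w} :
    forall q : Path y z, Legs p w -> Legs q w -> Legs (app p q) w :=
  match p in Path x y return forall q : Path y z, Legs p w -> Legs q w -> Legs (app p q) w with
  | pnil _ => fun q _ lq => lq
  | pcons C r => fun q lp lq => (fst lp, legs_app r q (snd lp) lq)
  end.

(** Rows of multicells (alpha_1, ..., alpha_m) with compatible tight sides:
    [Row p q s s'] has source the concatenation p of the sources of the
    alpha_i, target path q = (C_1,...,C_m) of their targets, leftmost tight
    side s and rightmost tight side s'. *)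
Inductive Row : forall {u u' v v' : Ob E}, Path u u' -> Path v v' -> Hom u v -> Hom u' v' -> Type :=
| rnil (u v : Ob E) (s : Hom u v) : Row (pnil u) (pnil v) s s
| rcons {u u1 u' v v1 v' : Ob E} {p1 : Path u u1} {C : Cospan v v1}
    {s : Hom u v} {s1 : Hom u1 v1} (alpha : Cell p1 C s s1)
    {p2 : Path u1 u'} {q : Path v1 v'} {s' : Hom u' v'}
    (rest : Row p2 q s1 s') : Row (app p1 p2) (pcons C q) s s'.

Fixpoint row_arities {u u' v v'} {p : Path u u'} {q : Path v v'} {s s'}
    (r : @Row u u' v v' p q s s') : list nat :=
  match r with
  | rnil _ _ _ => []
  | @rcons _ _ _ _ _ _ p1 _ _ _ _ _ _ _ rest => plength p1 :: row_arities rest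
  end.

(** Legs of the composite (alpha_1 ... alpha_m) / beta, given the legs of beta. *)
Fixpoint compose_legs {w : Ob E} {u u' v v'} {p : Path u u'} {q : Path v v'} {s s'}
    (r : @Row u u' v v' p q s s') : Legs q w -> Legs p w :=
  match r in @Row u u' v v' p q s s' return Legs q w -> Legs p w with
  | rnil _ _ _ => fun _ => tt
  | @rcons _ _ _ _ _ _ p1 _ _ _ alpha p2 _ _ rest =>
      fun lb => legs_app p1 p2 (legs_post p1 (fst lb) (cell_legs alpha))
                         (compose_legs rest (snd lb))
  end.

(** [VRel ra rs rg] : the row rg is the row of vertical composites
    alpha_i / sigma_i of the row ra = (alpha_i) with a row rs = (sigma_i) of
    UNARY multicells. *)
Inductive VRel : forall {u u' v v' x x' : Ob E} {p : Path u u'} {q : Path v v'}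
    {q' : Path x x'} {s s' t t' g g'},
    @Row u u' v v' p q s s' -> @Row v v' x x' q q' t t' ->
    @Row u u' x x' p q' g g' -> Prop :=
| vnil (u v x : Ob E) (s : Hom u v) (t : Hom v x) (g : Hom u x) :
    g = comp t s -> VRel (rnil u v s) (rnil v x t) (rnil u x g)
| vcons {u u1 u' v v1 v' x x1 x' : Ob E}
    {p1 : Path u u1} {C : Cospan v v1} {C' : Cospan x x1}
    {s : Hom u v} {s1 : Hom u1 v1} {t : Hom v x} {t1 : Hom v1 x1}
    {g : Hom u x} {g1 : Hom u1 x1}
    (alpha : Cell p1 C s s1) (sigma : Cell (pcons C (pnil v1)) C' t t1)
    (gamma : Cell p1 C' g g1)
    {p2 : Path u1 u'} {q : Path v1 v'} {q' : Path x1 x'}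
    {s' : Hom u' v'} {t' : Hom v' x'} {g' : Hom u' x'}
    (ra : Row p2 q s1 s') (rs : Row q q' t1 t') (rg : Row p2 q' g1 g') :
    g = comp t s ->
    cell_legs gamma = legs_post p1 (fst (cell_legs sigma)) (cell_legs alpha) ->
    VRel ra rs rg ->
    VRel (rcons alpha ra) (@rcons v v1 v' x x1 x' (pcons C (pnil v1)) C' t t1 sigma q q' t' rs)
         (rcons gamma rg).

(** Candidate globular decompositions of a multicell p => T with tight sides
    c0, c1: a row (alpha_1..alpha_m) from p to some path q : z0 -> z1 with
    outer tight sides c0, c1, and a globular multicell beta : q => T. *)
Definition DecData {x y z0 z1} (p : Path x y) (T : Cospan z0 z1)
    (c0 : Hom x z0) (c1 : Hom y z1) : Type :=
  { q : Path z0 z1 & (Row p q c0 c1 * Cell q T (idm z0) (idm z1))%type }.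

(** d is a globular decomposition of alpha with arities ks:
    alpha = (alpha_1 ... alpha_m)/beta with alpha_i k_i-ary.
    (The tight sides of the composite are id o c0, id o c1 = c0, c1.) *)
Definition is_glob_decomp {x y z0 z1} {p : Path x y} {T : Cospan z0 z1} {c0 c1}
    (alpha : Cell p T c0 c1) (ks : list nat) (d : DecData p T c0 c1) : Prop :=
  row_arities (fst (projT2 d)) = ks /\
  compose_legs (fst (projT2 d)) (cell_legs (snd (projT2 d))) = cell_legs alpha.

(** Generating relation: (alpha_1/sigma_1, ..., alpha_m/sigma_m ; beta)
    ~ (alpha_1, ..., alpha_m ; (sigma_1 ... sigma_m)/beta), for a row of
    unary multicells sigma_i whose outermost tight sides are identities. *)
Definition slide_rel {x y z0 z1} {p : Path x y} {T : Cospan z0 z1} {c0 c1}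
    (d1 d2 : DecData p T c0 c1) : Prop :=
  exists sigma : Row (projT1 d2) (projT1 d1) (idm z0) (idm z1),
    VRel (fst (projT2 d2)) sigma (fst (projT2 d1)) /\
    cell_legs (snd (projT2 d2)) = compose_legs sigma (cell_legs (snd (projT2 d1))).

Definition decomp_equiv {x y z0 z1} {p : Path x y} {T : Cospan z0 z1} {c0 c1} :
  relation (DecData p T c0 c1) := clos_refl_sym_trans _ slide_rel.

Definition cospan_has_nary_globular_decompositions (n : nat) : Prop :=
  forall (x y z0 z1 : Ob E) (p : Path x y) (T : Cospan z0 z1)
         (c0 : Hom x z0) (c1 : Hom y z1) (alpha : Cell p T c0 c1)
         (ks : list nat),
    plength p = n -> ks <> [] -> list_sum ks = n ->
    (exists d, is_glob_decomp alpha ks d) /\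
    (forall d d', is_glob_decomp alpha ks d -> is_glob_decomp alpha ks d' ->
                  decomp_equiv d d').

Definition cospan_has_globular_decompositions : Prop :=
  forall n : nat, cospan_has_nary_globular_decompositions n.

End CospanVDC.

(* Let alpha be a multicell from p into the cospan T with apex w, and fix the
   arities.  Among the decompositions of alpha there is a canonical one: its
   intermediate cospans all have apex w, with outer legs those of T and
   identities in between; its globular cell has identity legs; and the cells
   of its row have the legs of alpha, grouped according to the arities.  Any
   decomposition (alpha_i ; beta) slides onto the canonical one along the row
   of unary cells whose legs are the legs of beta, so any two decompositions
   are related through the canonical one. *)
From Stdlib Require Import List Relations Lia Program.Equality.

Arguments apex {E x y}.
Arguments lleg {E x y}.
Arguments rleg {E x y}.

Section CospanGlobularDecompositions.
Context {E : Category}.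

Lemma plength_app {x y z : Ob E} (p1 : Path x y) (p2 : Path y z) :
  plength (app p1 p2) = plength p1 + plength p2.
Proof. induction p1; simpl; auto. Qed.

Lemma path_split_at (k : nat) {x y : Ob E} (p : Path x y) :
  k <= plength p -> exists u (p1 : Path x u) (p2 : Path u y), app p1 p2 = p /\ plength p1 = k.
Proof.
  revert x p; induction k as [|k IHk]; intros x p Hk.
  - exists x, (pnil x), p; auto.
  - destruct p as [x|x u z C p]; simpl in Hk; [lia|].
    destruct (IHk _ p ltac:(lia)) as (u1 & p1 & p2 & <- & <-).
    exists u1, (pcons C p1), p2; auto.
Qed.

Lemma app_inj_plength {x y a a' : Ob E} (p1 : Path x a) (p2 : Path a y)
    (p1' : Path x a') (p2' : Path a' y) :
  app p1 p2 = app p1' p2' -> plength p1 = plength p1' ->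
  existT (fun a => (Path x a * Path a y)%type) a (p1, p2) = existT _ a' (p1', p2').
Proof.
  revert a' p1' p2'; induction p1 as [x|x u a C p1 IH]; intros a' p1' p2' Happ Hlen.
  - destruct p1'; simpl in Hlen; [|discriminate]. simpl in Happ; subst; reflexivity.
  - dependent destruction p1'; simpl in Hlen; [discriminate|].
    simpl in Happ; dependent destruction Happ.
    specialize (IH _ _ _ _ x ltac:(lia)); dependent destruction IH; reflexivity.
Qed.

Lemma legs_post_id {x y : Ob E} (p : Path x y) (w : Ob E) (l : Legs p w) :
  legs_post p (idm w) l = l.
Proof.
  induction p; simpl; [now destruct l|].
  destruct l; simpl; rewrite comp_id_l, IHp; reflexivity.
Qed.

Lemma legs_ok_post {x y : Ob E} (p : Path x y) {w w' : Ob E} (h : Hom w w')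
    (f : Hom x w) (g : Hom y w) (l : Legs p w) :
  legs_ok p f g l -> legs_ok p (comp h f) (comp h g) (legs_post p h l).
Proof.
  revert f; induction p; intros f Hl; simpl in *; [now subst|].
  destruct l as [e l], Hl as [<- Hl]; simpl.
  rewrite <- !comp_assoc; auto.
Qed.

Lemma legs_ok_right_unique {x y : Ob E} (p : Path x y) {w : Ob E} (f : Hom x w)
    (g g' : Hom y w) (l : Legs p w) :
  legs_ok p f g l -> legs_ok p f g' l -> g = g'.
Proof.
  revert f; induction p; intros f Hg Hg'; simpl in *; [congruence|].
  destruct l, Hg, Hg'; eauto.
Qed.

Lemma legs_app_inj {x y z : Ob E} (p1 : Path x y) (p2 : Path y z) {w : Ob E}
    (l1 l1' : Legs p1 w) (l2 l2' : Legs p2 w) :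
  legs_app p1 p2 l1 l2 = legs_app p1 p2 l1' l2' -> l1 = l1' /\ l2 = l2'.
Proof.
  induction p1; simpl; intros Heq; [destruct l1, l1'; auto|].
  destruct l1 as [e l1], l1' as [e' l1']; injection Heq as -> Heq.
  destruct (IHp1 _ _ _ _ _ Heq) as [-> ->]; auto.
Qed.

Lemma legs_app_surj {x y z : Ob E} (p1 : Path x y) (p2 : Path y z) {w : Ob E}
    (l : Legs (app p1 p2) w) :
  exists l1 l2, l = legs_app p1 p2 l1 l2.
Proof.
  induction p1; simpl in *; [exists tt, l; auto|].
  destruct l as [e l]; destruct (IHp1 _ l) as (l1 & l2 & ->).
  exists (e, l1), l2; reflexivity.
Qed.

Lemma legs_ok_app_inv {x y z : Ob E} (p1 : Path x y) (p2 : Path y z) {w : Ob E}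
    (f : Hom x w) (g : Hom z w) (l1 : Legs p1 w) (l2 : Legs p2 w) :
  legs_ok (app p1 p2) f g (legs_app p1 p2 l1 l2) ->
  exists h, legs_ok p1 f h l1 /\ legs_ok p2 h g l2.
Proof.
  revert f; induction p1; simpl; intros f Hl; [exists f; auto|].
  destruct l1 as [e l1], Hl as [He Hl].
  destruct (IHp1 _ _ _ _ Hl) as (h & H1 & H2); exists h; auto.
Qed.

Lemma length_row_arities {u u' v v' : Ob E} {p : Path u u'} {q : Path v v'} {s s'}
    (r : Row p q s s') :
  length (row_arities r) = plength q.
Proof. induction r; simpl; auto. Qed.

Lemma row_cons_split {u u' v v1 v' : Ob E} {P : Path u u'} {C : Cospan v v1}
    {q : Path v1 v'} {s : Hom u v} {s' : Hom u' v'} (r : Row P (pcons C q) s s') :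
  exists u1 (p1 : Path u u1) (p2 : Path u1 u') s1 (alpha : Cell p1 C s s1)
         (rest : Row p2 q s1 s'),
    existT (fun P => Row P (pcons C q) s s') P r = existT _ (app p1 p2) (rcons alpha rest).
Proof. dependent destruction r; do 6 eexists; reflexivity. Qed.

Lemma row_cons_inv {u u1 u' v v1 v' : Ob E} (p1 : Path u u1) (p2 : Path u1 u')
    {C : Cospan v v1} {q : Path v1 v'} {s : Hom u v} {s' : Hom u' v'}
    (r : Row (app p1 p2) (pcons C q) s s') (ks : list nat) :
  row_arities r = plength p1 :: ks ->
  exists s1 (alpha : Cell p1 C s s1) (rest : Row p2 q s1 s'),
    r = rcons alpha rest /\ row_arities rest = ks.
Proof.
  intros Har.
  destruct (row_cons_split r) as (u1' & p1' & p2' & s1 & alpha & rest & Hr).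
  pose proof (f_equal (fun X => row_arities (projT2 X)) Hr) as Har'; simpl in Har'.
  rewrite Har in Har'; injection Har' as Hlen Hks.
  pose proof (app_inj_plength _ _ _ _ (f_equal (@projT1 _ _) Hr) Hlen) as Hsplit.
  dependent destruction Hsplit.
  exists s1, alpha, rest; auto.
Qed.

Definition unary_cell {v v1 x x1 : Ob E} (C : Cospan v v1) (D : Cospan x x1)
    (f : Hom (apex C) (apex D)) (t : Hom v x) (t1 : Hom v1 x1)
    (Hl : comp f (lleg C) = comp (lleg D) t) (Hr : comp f (rleg C) = comp (rleg D) t1) :
  Cell (pcons C (pnil v1)) D t t1 :=
  exist _ (f, tt) (conj Hl Hr).

Section ApexPath.
Variable w : Ob E.

Fixpoint apex_path (m : nat) {a b : Ob E} (la : Hom a w) (lb : Hom b w) : Path a b :=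
  match m with
  | 0 => pcons (Build_Cospan a b w la lb) (pnil b)
  | S m => pcons (Build_Cospan a w w la (idm w)) (apex_path m (idm w) lb)
  end.

Fixpoint apex_legs (m : nat) {a b : Ob E} (la : Hom a w) (lb : Hom b w) :
    Legs (apex_path m la lb) w :=
  match m with
  | 0 => (idm w, tt)
  | S m => (idm w, apex_legs m (idm w) lb)
  end.

Lemma plength_apex_path (m : nat) {a b : Ob E} (la : Hom a w) (lb : Hom b w) :
  plength (apex_path m la lb) = S m.
Proof. revert a la; induction m; intros; simpl; auto. Qed.

Lemma legs_ok_apex_legs (m : nat) {a b : Ob E} (la : Hom a w) (lb : Hom b w) :
  legs_ok (apex_path m la lb) la lb (apex_legs m la lb).
Proof.
  revert a la; induction m; intros; simpl; rewrite !comp_id_l; auto.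
Qed.

Lemma row_to_apex_path (ks : list nat) (m : nat) {u u' a b : Ob E} (p : Path u u')
    (la : Hom a w) (lb : Hom b w) (g : Hom u a) (g' : Hom u' b) (l : Legs p w) :
  length ks = S m -> list_sum ks = plength p ->
  legs_ok p (comp la g) (comp lb g') l ->
  exists r : Row p (apex_path m la lb) g g',
    row_arities r = ks /\ compose_legs r (apex_legs m la lb) = l.
Proof.
  revert m u a p la g l; induction ks as [|k ks IH];
    intros m u a p la g l Hlen Hsum Hl; simpl in Hlen, Hsum; [discriminate|].
  destruct (path_split_at k p ltac:(lia)) as (u1 & p1 & p2 & <- & Hk).
  destruct (legs_app_surj p1 p2 l) as (l1 & l2 & ->).
  destruct (legs_ok_app_inv _ _ _ _ _ _ Hl) as (h & H1 & H2).
  rewrite plength_app in Hsum.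
  destruct m as [|m].
  - destruct ks; [|discriminate]; simpl in Hsum.
    dependent destruction p2; [|simpl in Hsum; lia].
    destruct l2; simpl in H2; subst h.
    exists (rcons (exist _ l1 H1 : Cell p1 (Build_Cospan a b w la lb) g g') (rnil _ b g')).
    simpl; rewrite legs_post_id, Hk; auto.
  - rewrite <- (comp_id_l _ _ _ h) in H2.
    destruct (IH m _ _ p2 (idm w) h l2 ltac:(lia) ltac:(lia) H2) as (r2 & <- & Hr2).
    assert (H1' : legs_ok p1 (comp la g) (comp (idm w) h) l1) by now rewrite comp_id_l.
    exists (rcons (exist _ l1 H1' : Cell p1 (Build_Cospan a w w la (idm w)) g h) r2).
    simpl; rewrite legs_post_id, Hr2, Hk; auto.
Qed.

(* The unary cells sigma_i have the legs f_i of beta; the tight side between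
   sigma_i and sigma_(i+1) is forced to be f_i (rleg C_i), since the inner legs
   of the apex path are identities. *)
Lemma slide_to_apex_path {u u' v v' : Ob E} {p : Path u u'} {q : Path v v'}
    {s : Hom u v} {s' : Hom u' v'} (r : Row p q s s')
    (lq : Legs q w) (f : Hom v w) (f' : Hom v' w) :
  legs_ok q f f' lq ->
  forall (m : nat) {a b : Ob E} (la : Hom a w) (lb : Hom b w) (g : Hom u a) (g' : Hom u' b)
         (rc : Row p (apex_path m la lb) g g') (t : Hom v a) (t' : Hom v' b),
  row_arities r = row_arities rc ->
  compose_legs r lq = compose_legs rc (apex_legs m la lb) ->
  f = comp la t -> f' = comp lb t' -> g = comp t s -> g' = comp t' s' ->
  exists sigma : Row q (apex_path m la lb) t t',
    VRel r sigma rc /\ lq = compose_legs sigma (apex_legs m la lb).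
Proof.
  revert lq f f'; induction r as [u v s|u u1 u' v v1 v' p1 C s s1 alpha p2 q s' r IH];
    intros lq f f' Hlq m a b la lb g g' rc t t' Har Hcomp Hf Hf' Hg Hg'.
  { exfalso; pose proof (length_row_arities rc) as Hlen.
    rewrite <- Har, plength_apex_path in Hlen; discriminate. }
  destruct lq as [f1 lq], Hlq as [Hf1 Hlq]; simpl in Hf1, Hlq.
  destruct m as [|m]; simpl apex_path in rc;
    destruct (row_cons_inv p1 p2 rc (row_arities r) (eq_sym Har))
      as (s1' & gamma & rc2 & -> & Har2);
    simpl in Hcomp; apply legs_app_inj in Hcomp as [Hgamma Hcomp];
    rewrite legs_post_id in Hgamma.
  - dependent destruction r.
    2: { pose proof (length_row_arities rc2) as Hlen.
         rewrite Har2 in Hlen; discriminate. }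
    dependent destruction rc2.
    exists (rcons (unary_cell C (Build_Cospan _ _ w la lb) f1 t t'
                     (eq_trans Hf1 Hf) (eq_trans Hlq Hf')) (rnil _ _ t')).
    split; [|destruct lq; simpl; rewrite comp_id_l; reflexivity].
    apply vcons; [assumption|symmetry; exact Hgamma|now apply vnil].
  - assert (Hs1' : s1' = comp (comp f1 (rleg C)) s1).
    { pose proof (legs_ok_post _ f1 _ _ _ (proj2_sig alpha)) as Halpha.
      pose proof (proj2_sig gamma) as Hgamma'; simpl in Halpha, Hgamma'.
      change (proj1_sig gamma) with (cell_legs gamma) in Hgamma'.
      change (proj1_sig alpha) with (cell_legs alpha) in Halpha.
      rewrite Hgamma, comp_assoc, Hf1, Hf, <- comp_assoc, <- Hg in Halpha.
      rewrite comp_id_l in Hgamma'; rewrite <- comp_assoc.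
      exact (legs_ok_right_unique _ _ _ _ _ Hgamma' Halpha). }
    destruct (IH lq _ _ Hlq m _ _ (idm w) lb _ _ rc2 (comp f1 (rleg C)) t'
                (eq_sym Har2) Hcomp (eq_sym (comp_id_l _ _ _ _)) Hf' Hs1' Hg')
      as (sigma & Hsigma & Hlq').
    exists (rcons (unary_cell C (Build_Cospan _ _ w la (idm w)) f1 t (comp f1 (rleg C))
                     (eq_trans Hf1 Hf) (eq_sym (comp_id_l _ _ _ _))) sigma).
    split; [|simpl; rewrite comp_id_l, <- Hlq'; reflexivity].
    apply vcons; [assumption|symmetry; exact Hgamma|exact Hsigma].
Qed.

End ApexPath.
End CospanGlobularDecompositions.

Theorem proposition7p4 (E : Category) : @cospan_has_globular_decompositions E.
Proof.
  intros n x y z0 z1 p T c0 c1 alpha ks Hn Hks Hsum.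
  destruct ks as [|k ks]; [contradiction|].
  set (w := apex T); set (m := length ks).
  destruct (row_to_apex_path w (k :: ks) m p (lleg T) (rleg T) c0 c1 (cell_legs alpha)
              eq_refl ltac:(rewrite Hsum, Hn; reflexivity) (proj2_sig alpha))
    as (rc & Harc & Hrc).
  assert (Hbeta : legs_ok (apex_path w m (lleg T) (rleg T)) (comp (lleg T) (idm z0))
                    (comp (rleg T) (idm z1)) (apex_legs w m (lleg T) (rleg T)))
    by (rewrite !comp_id_r; apply legs_ok_apex_legs).
  set (d0 := existT _ _ (rc, exist _ _ Hbeta) : DecData p T c0 c1).
  assert (Hslide : forall d, is_glob_decomp alpha (k :: ks) d -> slide_rel d0 d).
  { intros [q [r beta]] [Har Hcomp]; simpl in Har, Hcomp.
    destruct (slide_to_apex_path w r (cell_legs beta) _ _ (proj2_sig beta) m (lleg T) (rleg T)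
                c0 c1 rc (idm z0) (idm z1) (eq_trans Har (eq_sym Harc))
                (eq_trans Hcomp (eq_sym Hrc)) eq_refl eq_refl
                (eq_sym (comp_id_l _ _ _ _)) (eq_sym (comp_id_l _ _ _ _)))
      as (sigma & Hsigma & Hbeta').
    exists sigma; auto. }
  split; [exists d0; split; auto|].
  intros d d' Hd Hd'.
  apply rst_trans with d0; [apply rst_sym|]; apply rst_step; auto.
Qed.
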